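(* Suppose that $X$ is a metric space containing at most $k$ pairwise disjoint cones, that is, $|I|\le k$ for every family $(C(x_i,y_i))_{i\in I}$ of pairwise disjoint cones in $X$. Then $\mathrm{rk}(A)\le\frac12 k$ for all $A\in\mathscr A(X)$.
   Context: $I(x,y)=\{v: d(x,v)+d(v,y)=d(x,y)\}$, $C(x,v)=\{y\in X: v\in I(x,y)\}$. For $f\colon X\to\mathbb R$, $A(f)$ is the set of unordered pairs $\{x,y\}$ ($x=y$ allowed) with $f(x)+f(y)=d(x,y)$; $\Delta(X)=\{f: f(x)+f(y)\ge d(x,y)\ \forall x,y\}$; $\mathscr A(X)=\{A(f): f\in\Delta(X),\ \bigcup A(f)=X\}$. For $A\in\mathscr A(X)$, $\mathrm{rk}(A)$ is the dimension of the affine space $H(A)=\{g\in\mathbb R^X: g(x)+g(y)=d(x,y)\ \forall\{x,y\}\in A\}$. *)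

From Stdlib Require Import Reals.
From mathcomp Require Import all_boot all_order all_algebra.
From mathcomp Require Import Rstruct.
Set Implicit Arguments. Unset Strict Implicit. Unset Printing Implicit Defensive.
Import Order.TTheory GRing.Theory Num.Theory.
Local Open Scope ring_scope.

Definition is_metric (X : Type) (d : X -> X -> R) : Prop :=
  [/\ forall x, d x x = 0,
      forall x y, d x y = 0 -> x = y,
      forall x y, d x y = d y x
    & forall x y z, d x z <= d x y + d y z].

Definition interval_I (X : Type) (d : X -> X -> R) (x y : X) : X -> Prop :=
  fun v => d x v + d v y = d x y.

Definition cone (X : Type) (d : X -> X -> R) (x v : X) : X -> Prop :=
  fun y => interval_I d x y v.

Definition at_most_k_disjoint_cones (X : Type) (d : X -> X -> R) (k : nat) : Prop :=
  forall (n : nat) (xs ys : 'I_n -> X),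
    (forall i j : 'I_n, i != j -> forall z, ~ (cone d (xs i) (ys i) z /\ cone d (xs j) (ys j) z)) ->
    (n <= k)%N.

(* A(f), as a symmetric relation: {x,y} \in A(f) iff f x + f y = d x y *)
Definition Aset (X : Type) (d : X -> X -> R) (f : X -> R) : X -> X -> Prop :=
  fun x y => f x + f y = d x y.

Definition Delta (X : Type) (d : X -> X -> R) (f : X -> R) : Prop :=
  forall x y, d x y <= f x + f y.

Definition scrA (X : Type) (d : X -> X -> R) (A : X -> X -> Prop) : Prop :=
  exists f : X -> R, [/\ Delta d f, (forall x, exists y, Aset d f x y) & A = Aset d f].

Definition H (X : Type) (d : X -> X -> R) (A : X -> X -> Prop) : (X -> R) -> Prop :=
  fun g => forall x y, A x y -> g x + g y = d x y.

Definition lin_indep (X : Type) (m : nat) (v : 'I_m -> X -> R) : Prop :=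
  forall c : 'I_m -> R, (forall x, \sum_(i < m) c i * v i x = 0) -> forall i, c i = 0.

(* the affine space S (subset of R^X) has dimension <= r : every affinely
   independent family g_0,...,g_m of points of S has m <= r *)
Definition affdim_le (X : Type) (S : (X -> R) -> Prop) (r : R) : Prop :=
  forall (m : nat) (g : 'I_m.+1 -> X -> R),
    (forall i, S (g i)) ->
    lin_indep (fun (i : 'I_m) (x : X) => g (lift ord0 i) x - g ord0 x) ->
    (m%:R : R) <= r.

Definition rk_le (X : Type) (d : X -> X -> R) (A : X -> X -> Prop) (r : R) : Prop :=
  affdim_le (H d A) r.

(* Take affinely independent g_0, ..., g_m in H(A), A = A(f).  The differences
   h_i = g_(i+1) - g_0 are linearly independent and satisfy h(x) + h(y) = 0 on
   every pair of A.  A cone C(a,b) with {a,b} in A lies inside {z | {a,z} in A},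
   so the vector h = (h_i)_i is constant, equal to -h(a), on it.  Linear
   independence yields points p_1, ..., p_m whose vectors h(p_j) form a basis;
   with partners q_j such that {p_j,q_j} in A, the 2m cones C(p_j,q_j) and
   C(q_j,p_j) carry the pairwise distinct values -h(p_j) and h(p_j), so they are
   pairwise disjoint and 2m <= k. *)
From Pilot Require Import Defs.
From Stdlib Require Import Reals Classical.
From mathcomp Require Import all_boot all_order all_algebra.
From mathcomp Require Import Rstruct.
From mathcomp Require Import lra zify.
Set Implicit Arguments. Unset Strict Implicit. Unset Printing Implicit Defensive.
Import Order.TTheory GRing.Theory Num.Theory.
Local Open Scope ring_scope.

Section SpanningPoints.
Variables (F : fieldType) (T : Type) (n : nat) (v : T -> 'rV[F]_n).

Definition evalmx (s : seq T) : 'M[F]_(size s, n) :=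
  \matrix_i v (tnth (in_tuple s) i).

Lemma sub_evalmx_head x s : (v x <= evalmx (x :: s))%MS.
Proof. by have := row_sub ord0 (evalmx (x :: s)); rewrite rowK. Qed.

Lemma sub_evalmx_cons x s : (evalmx s <= evalmx (x :: s))%MS.
Proof.
apply/row_subP => i; have := row_sub (lift ord0 i) (evalmx (x :: s)).
by rewrite !rowK !(tnth_nth x).
Qed.

Hypothesis no_annihilator :
  forall c : 'cV[F]_n, (forall x, v x *m c = 0) -> c = 0.

Lemma row_full_evalmx s : (forall x, (v x <= evalmx s)%MS) -> row_full (evalmx s).
Proof.
move=> sub_s; have coker0 : cokermx (evalmx s) = 0.
  apply/matrixP => i j; have col0 : col j (cokermx (evalmx s)) = 0.
    apply: no_annihilator => x.
    have kill : v x *m cokermx (evalmx s) = 0 by apply/eqP; rewrite -submxE.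
    by rewrite colE mulmxA kill mul0mx.
  by have := congr1 (fun c : 'cV_n => c i 0) col0; rewrite !mxE.
have := mxrank_coker (evalmx s); rewrite coker0 mxrank0.
by rewrite /row_full eqn_leq rank_leq_col /=; lia.
Qed.

Lemma exists_row_full_evalmx : exists s, row_full (evalmx s).
Proof.
suff [s sub_s] : exists s, forall x, (v x <= evalmx s)%MS.
  by exists s; exact: row_full_evalmx.
apply: NNPP => no_spanning_seq.
have rank_unbounded r : exists s, (r <= \rank (evalmx s))%N.
  elim: r => [|r [s le_r_s]]; first by exists [::].
  have [x Nsub] : exists x, ~~ (v x <= evalmx s)%MS.
    apply: NNPP => all_sub; apply: no_spanning_seq; exists s => x.
    by apply/negPn/negP => Nsub; apply: all_sub; exists x.
  exists (x :: s); apply: leq_ltn_trans le_r_s (rank_ltmx _).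
  rewrite ltmxE sub_evalmx_cons /=; apply: contra Nsub.
  exact: submx_trans (sub_evalmx_head x s).
have [s] := rank_unbounded n.+1.
by rewrite ltnNge rank_leq_col.
Qed.

Lemma exists_row_free_points : exists p : 'I_n -> T, row_free (\matrix_i v (p i)).
Proof.
have [s full_s] := exists_row_full_evalmx.
exists (fun i => tnth (in_tuple s) (fullrankfun full_s i)).
have -> : \matrix_i v (tnth (in_tuple s) (fullrankfun full_s i))
          = rowsub (fullrankfun full_s) (evalmx s).
  by apply/matrixP => i j; rewrite !mxE.
exact: fullrowsub_free.
Qed.

End SpanningPoints.

Lemma row_free_signed_rows_inj (F : numFieldType) m n (M : 'M[F]_(m, n)) :
  row_free M -> injective (fun je : 'I_m * bool => (-1) ^+ je.2 *: row je.1 M).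
Proof.
move=> free_M [j e] [l e'] /= eq_rows.
pose u : 'rV[F]_m := (-1) ^+ e *: delta_mx 0 j - (-1) ^+ e' *: delta_mx 0 l.
have u0 : u = 0.
  apply/eqP; rewrite -(mulmx_free_eq0 _ free_M) mulmxBl -!scalemxAl -!rowE.
  by rewrite eq_rows subrr.
have := congr1 (fun w : 'rV_m => w 0 j) u0; rewrite !mxE !eqxx /= mulr1.
have [<-|ne_lj] := eqVneq l j; last by rewrite mulr0 subr0 => /eqP; rewrite signr_eq0.
by rewrite mulr1 => /eqP; rewrite subr_eq0 => /eqP /signr_inj ->.
Qed.

Definition diff_row (X : Type) m (g : 'I_m.+1 -> X -> R) (x : X) : 'rV[R]_m :=
  \row_i (g (lift ord0 i) x - g ord0 x).

Lemma diff_row_pair (X : Type) (d : X -> X -> R) (A : X -> X -> Prop) m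
    (g : 'I_m.+1 -> X -> R) x y :
  (forall i, H d A (g i)) -> A x y -> diff_row g x + diff_row g y = 0.
Proof.
move=> gH Axy; apply/rowP => i; rewrite !mxE.
have := gH (lift ord0 i) x y Axy; have := gH ord0 x y Axy; lra.
Qed.

Lemma lin_indep_no_annihilator (X : Type) m (g : 'I_m.+1 -> X -> R) :
  lin_indep (fun i x => g (lift ord0 i) x - g ord0 x) ->
  forall c : 'cV[R]_m, (forall x, diff_row g x *m c = 0) -> c = 0.
Proof.
move=> indep c kill; apply/colP => i; rewrite mxE.
apply: (indep (fun j => c j 0)) => x.
have := congr1 (fun w : 'M_1 => w 0 0) (kill x); rewrite !mxE => kill0.
rewrite -[RHS]kill0 /diff_row.
by apply: eq_bigr => j _; rewrite mxE mulrC.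
Qed.

Section Cones.
Variables (X : Type) (d : X -> X -> R).
Hypotheses (d_sym : forall x y, d x y = d y x)
           (d_tri : forall x y z, d x z <= d x y + d y z).
Variable f : X -> R.
(* [Reals] also exports a [Delta], hence the qualified name. *)
Hypotheses (f_Delta : Defs.Delta d f) (f_cover : forall x, exists y, Aset d f x y).

Lemma Aset_sym x y : Aset d f x y -> Aset d f y x.
Proof. by rewrite /Aset addrC d_sym. Qed.

Lemma Aset_cone a b z : Aset d f a b -> cone d a b z -> Aset d f a z.
Proof.
(* With y a partner of z: f z = d z y - f y <= d z b + d b y - f y <= d z b + f b. *)
rewrite /Aset /cone /interval_I => Aab abz.
have [y Azy] := f_cover z; rewrite /Aset in Azy.
have := d_tri z b y; have := f_Delta b y; have := f_Delta a z.
rewrite (d_sym z b); lra.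
Qed.

Lemma diff_row_cone m (g : 'I_m.+1 -> X -> R) a b z :
  (forall i, H d (Aset d f) (g i)) -> Aset d f a b -> cone d a b z ->
  diff_row g z = - diff_row g a.
Proof.
move=> gH Aab abz; apply/eqP; rewrite -addr_eq0 addrC.
exact/eqP/(diff_row_pair gH)/(Aset_cone Aab abz).
Qed.

End Cones.

Theorem proposition5p3 (X : Type) (d : X -> X -> R) (k : nat) :
  is_metric d ->
  at_most_k_disjoint_cones d k ->
  forall A : X -> X -> Prop, scrA d A -> rk_le d A (k%:R / 2).
Proof.
move=> [_ _ d_sym d_tri] few_cones A [f [f_Delta f_cover ->]] m g gH indep.
have [p free_p] := exists_row_free_points (lin_indep_no_annihilator indep).
have [q Apq] := fin_all_exists (fun j : 'I_m => f_cover (p j)).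
pose P := \matrix_j diff_row g (p j).
pose apex (je : 'I_m * bool) := if je.2 then p je.1 else q je.1.
pose base (je : 'I_m * bool) := if je.2 then q je.1 else p je.1.
have cone_value je z : cone d (apex je) (base je) z ->
    diff_row g z = (-1) ^+ je.2 *: row je.1 P.
  have cone_row := diff_row_cone d_sym d_tri f_Delta f_cover gH.
  case: je => j [] /= cz; rewrite rowK.
    by rewrite (cone_row _ _ _ (Apq j) cz) expr1 scaleN1r.
  rewrite (cone_row _ _ _ (Aset_sym d_sym (Apq j)) cz) expr0 scale1r.
  have /eqP := diff_row_pair gH (Apq j).
  by rewrite addrC addr_eq0 => /eqP ->; rewrite opprK.
have : (#|{: 'I_m * bool}| <= k)%N.
  apply: (few_cones _ (apex \o enum_val) (base \o enum_val)).
  move=> i i' ne_ii' z [cz cz'].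
  move/negP: ne_ii'; apply; apply/eqP/enum_val_inj/(row_free_signed_rows_inj free_p).
  by rewrite /= -(cone_value _ _ cz) -(cone_value _ _ cz').
rewrite card_prod card_ord card_bool => le_2m_k.
by rewrite (_ : (2 : R) = 2%:R) // ler_pdivlMr ?ltr0n // -natrM ler_nat.
Qed.
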